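(* Let $G$ be a connected graph and let $G_\pi$ be a signed graph with underlying graph $G$ that is not balanced. Then there exists a spanning proper subgraph $H$ of $G$ (i.e. $V(H)=V(G)$ and $E(H)\subsetneq E(G)$) such that $\lambda_1(G_\pi)<\rho(H)$.
   Context: All graphs are finite, simple and undirected. A signed graph $G_\pi$ is a pair $(G,\pi)$ with $G=(V,E)$ a graph and $\pi:E\to\{+1,-1\}$. Its adjacency matrix $A(G_\pi)=(A_{ij})$ is the symmetric matrix with $A_{ij}=\pi(\{i,j\})$ if $\{i,j\}\in E$ and $A_{ij}=0$ otherwise; its eigenvalues $\lambda_1(G_\pi)\ge\cdots\ge\lambda_n(G_\pi)$ are those of $A(G_\pi)$. Two signed graphs $G_\pi,G_{\pi'}$ on the same graph are switching equivalent if $A(G_{\pi'})=D^{-1}A(G_\pi)D$ for some diagonal matrix $D$ with diagonal entries $\pm1$. $G_+$ denotes the signing with all signs $+1$. $G_\pi$ is balanced if it is switching equivalent to $G_+$. $\rho(H)$ denotes the spectral radius (largest modulus of an eigenvalue) of the adjacency matrix of a graph $H$. *)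

From mathcomp Require Import all_boot all_order all_algebra.
Set Implicit Arguments. Unset Strict Implicit. Unset Printing Implicit Defensive.
Import Order.TTheory GRing.Theory Num.Theory.
Local Open Scope ring_scope.

Definition simple_graph (n : nat) (G : rel 'I_n) : Prop :=
  (forall i j, G i j = G j i) /\ (forall i, ~~ G i i).

Definition connected_graph (n : nat) (G : rel 'I_n) : Prop :=
  (0 < n)%N /\ forall i j, connect G i j.

Definition signing (R : nzRingType) (n : nat) (G : rel 'I_n) (pi : 'I_n -> 'I_n -> R)
  : Prop :=
  forall i j, G i j -> (pi i j = 1 \/ pi i j = -1) /\ pi i j = pi j i.

Definition signed_adj (R : nzRingType) (n : nat) (G : rel 'I_n) (pi : 'I_n -> 'I_n -> R)
  : 'M[R]_n := \matrix_(i, j) (if G i j then pi i j else 0).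

Definition adj (R : nzRingType) (n : nat) (G : rel 'I_n) : 'M[R]_n :=
  signed_adj G (fun _ _ => 1).

Definition switching_equiv (R : comUnitRingType) (n : nat) (A A' : 'M[R]_n) : Prop :=
  exists d : 'I_n -> R, (forall i, d i = 1 \/ d i = -1) /\
    A' = invmx (diag_mx (\row_i d i)) *m A *m diag_mx (\row_i d i).

Definition balanced (R : comUnitRingType) (n : nat) (G : rel 'I_n)
  (pi : 'I_n -> 'I_n -> R) : Prop :=
  switching_equiv (signed_adj G pi) (adj R G).

Definition is_lambda1 (R : realFieldType) (n : nat) (A : 'M[R]_n) (l : R) : Prop :=
  eigenvalue A l /\ forall a, eigenvalue A a -> a <= l.

Definition is_spectral_radius (R : realFieldType) (n : nat) (A : 'M[R]_n) (r : R)
  : Prop :=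
  (exists a, eigenvalue A a /\ `|a| = r) /\ forall a, eigenvalue A a -> `|a| <= r.

From mathcomp Require Import all_boot all_order all_algebra.
From mathcomp Require Import complex.
From mathcomp Require Import ring lra.
From Stdlib Require Import Classical.
Import Order.TTheory GRing.Theory Num.Theory.
Set Implicit Arguments. Unset Strict Implicit. Unset Printing Implicit Defensive.
Local Open Scope ring_scope.
Local Open Scope sesquilinear_scope.

(* Let x be an eigenvector of A(G_pi) for lambda_1 = x^T A x / |x|^2 and compare Rayleigh
   quotients.  If x_a A_ab x_b < 0 on some edge ab, then for H = G - ab every term of
   |x|^T A(H) |x| dominates the corresponding term of x^T A x and the deleted terms were
   negative, so rho(H) > lambda_1.  If x has a zero entry, connectivity gives an edge ab with
   x_a = 0 <> x_b; the eigen-equation at a gives another neighbour w of a with x_w <> 0, so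
   pushing |x| slightly in the direction e_a raises the quotient for H = G - ab above lambda_1.
   Otherwise every edge term is positive and switching by the signs of x balances G_pi. *)

Lemma trmxC_mul (C : numClosedFieldType) m n p (M : 'M[C]_(m, n)) (N : 'M[C]_(n, p)) :
  (M *m N)^t* = N^t* *m M^t*.
Proof. by rewrite trmx_mul map_mxM. Qed.

Section HermitianRayleigh.
Variables (C : numClosedFieldType) (n : nat) (A : 'M[C]_n).
Hypothesis hermA : A \is hermsymmx.
Local Notation P := (spectralmx A).
Local Notation d := (spectral_diag A).

Lemma spectralmx_diag : P *m A = diag_mx d *m P.
Proof.
have /orthomx_spectralP defA := hermitian_normalmx hermA.
by rewrite [X in _ *m X = _]defA !mulmxA mulmxV ?spectral_unit // mul1mx.
Qed.

Lemma spectral_diag_eigenvalue k : eigenvalue A (d 0 k).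
Proof.
apply/eigenvalueP; exists (row k P).
  by rewrite rowE -mulmxA spectralmx_diag mulmxA -!rowE row_diag_mx -scalemxAl -rowE.
apply: contra_neq (oner_neq0 C) => Pk0.
have := congr1 (fun v => (v *m P^t*) 0 k) Pk0.
by rewrite /= -row_mul (unitarymxP (spectral_unitarymx A)) mul0mx !mxE eqxx.
Qed.

Lemma hermitian_form_spectral (y : 'rV_n) :
  (y *m A *m y^t*) 0 0 = \sum_k d 0 k * `|(y *m P^t*) 0 k| ^+ 2.
Proof.
have /orthomx_spectralP defA := hermitian_normalmx hermA.
rewrite [X in y *m X]defA invmx_unitary ?spectral_unitarymx // !mulmxA.
rewrite -[_ *m P *m _]mulmxA -[P *m y^t*]trmxCK trmxC_mul trmxCK mxE.
by apply: eq_bigr => k _; rewrite mul_mx_diag !mxE normCK mulrAC mulrC.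
Qed.

Lemma unitary_form_spectral (y : 'rV_n) :
  (y *m y^t*) 0 0 = \sum_k `|(y *m P^t*) 0 k| ^+ 2.
Proof.
rewrite -{1}(mulmxKtV y (spectral_unitarymx A)) // -mulmxA.
rewrite -[P *m y^t*]trmxCK trmxC_mul trmxCK mxE.
by apply: eq_bigr => k _; rewrite !mxE normCK.
Qed.

Lemma hermitian_form_le_eigenvalue : (0 < n)%N ->
  exists a, [/\ eigenvalue A a, a \is Num.real &
    forall y : 'rV_n, (y *m A *m y^t*) 0 0 <= a * (y *m y^t*) 0 0].
Proof.
move=> n_gt0.
have d_real k : d 0 k \is Num.real.
  exact: mxOverP (hermitian_spectral_diag_real hermA) 0 k.
have [k _ kmax] :=
  @real_arg_maxP _ _ (Ordinal n_gt0) xpredT (d 0) isT (fun k _ => d_real k).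
exists (d 0 k); split=> [||y]; [exact: spectral_diag_eigenvalue | exact: d_real |].
rewrite hermitian_form_spectral unitary_form_spectral mulr_sumr.
by apply: ler_sum => j _; apply: ler_wpM2r; [rewrite exprn_ge0 | exact: kmax].
Qed.

End HermitianRayleigh.

Lemma symmetric_form_lt_eigenvalue (R : rcfType) n (B : 'M[R]_n) (y : 'rV[R]_n) mu :
  B^T = B -> mu * (y *m y^T) 0 0 < (y *m B *m y^T) 0 0 ->
  exists a, eigenvalue B a /\ mu < a.
Proof.
move=> B_sym muB.
case: n => [|n] in B y B_sym muB *.
  by move: muB; rewrite !mxE !big_ord0 mulr0 ltxx.
pose toC := real_complex R.
have toC_real (x : R) : toC x \is Num.real by apply/complex_realP; exists x.
have map_tC m p (M : 'M[R]_(m, p)) : (map_mx toC M)^t* = map_mx toC M^T.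
  by apply/matrixP => i j; rewrite !mxE conj_Creal ?toC_real.
have hermBC : map_mx toC B \is hermsymmx.
  apply: realsym_hermsym; last by apply/mxOverP => i j; rewrite mxE toC_real.
  by apply/is_hermitianmxP; rewrite expr0 scale1r map_mx_id // map_trmx B_sym.
have [b [eig /complex_realP[a b_def] aB]] := hermitian_form_le_eigenvalue hermBC isT.
rewrite {}b_def in eig aB.
exists a; split; first by rewrite -(eigenvalue_map toC).
have := aB (map_mx toC y).
rewrite map_tC -!map_mxM ![map_mx _ _ 0 0]mxE -rmorphM lecR => {}aB.
have yy_ge0 : 0 <= (y *m y^T) 0 0.
  by rewrite mxE sumr_ge0 // => k _; rewrite mxE -expr2 sqr_ge0.
rewrite ltNge; apply: contraTN muB => a_le_mu.
by rewrite -leNgt (le_trans aB) ?ler_wpM2r.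
Qed.

Close Scope sesquilinear_scope.

Lemma connect_cross_edge (T : finType) (e : rel T) (P : pred T) u t :
  connect e u t -> P u -> ~~ P t -> exists a b, [/\ e a b, P a & ~~ P b].
Proof.
case/connectP=> p + ->; elim: p u => [|v p IHp] u /=; first by move=> _ ->.
case/andP=> euv pv Pu Pt.
by have [Pv|nPv] := boolP (P v); [exact: IHp pv Pv Pt | exists u, v].
Qed.

Lemma eigenvalue_eigenfun (F : fieldType) n (A : 'M[F]_n) l : eigenvalue A l ->
  exists2 x : 'I_n -> F, (exists i, x i != 0) & forall j, \sum_i x i * A i j = l * x j.
Proof.
case/eigenvalueP=> v vA v_neq0; exists (v 0).
  apply/existsP; apply: contraR v_neq0 => /existsPn v0.
  by apply/eqP/rowP => i; rewrite mxE; apply/eqP/negPn.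
by move=> j; have /rowP/(_ j) := vA; rewrite !mxE.
Qed.

Lemma lambda1_unique (R : realFieldType) n (A : 'M[R]_n) l l' :
  is_lambda1 A l -> is_lambda1 A l' -> l = l'.
Proof. by move=> [Al lmax] [Al' l'max]; apply: le_anti; rewrite lmax ?l'max. Qed.

Section RayleighQuotients.
Variables (R : rcfType) (n : nat).

Definition qform (M : 'M[R]_n) (y : 'I_n -> R) :=
  \sum_(p : 'I_n * 'I_n) y p.1 * M p.1 p.2 * y p.2.

Definition sqnorm (y : 'I_n -> R) := \sum_i y i ^+ 2.

Lemma qformE (M : 'M[R]_n) (y : 'rV[R]_n) : (y *m M *m y^T) 0 0 = qform M (y 0).
Proof.
rewrite mxE /qform -(pair_bigA _ (fun i j => y 0 i * M i j * y 0 j)) exchange_big.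
apply: eq_bigr => j _.
by rewrite !mxE mulr_suml; apply: eq_bigr => i _.
Qed.

Lemma sqnormE (y : 'rV[R]_n) : (y *m y^T) 0 0 = sqnorm (y 0).
Proof. by rewrite mxE; apply: eq_bigr => i _; rewrite !mxE expr2. Qed.

Lemma qform_lt_eigenvalue (M : 'M[R]_n) y mu :
  M^T = M -> mu * sqnorm y < qform M y -> exists a, eigenvalue M a /\ mu < a.
Proof.
move=> M_sym muM; apply: (symmetric_form_lt_eigenvalue (y := \row_i y i)) => //.
rewrite qformE sqnormE; move: muM; congr (_ * _ < _).
  by apply: eq_bigr => i _; rewrite mxE.
by apply: eq_bigr => p _; rewrite !mxE.
Qed.

Lemma adj_tr (H : rel 'I_n) : (forall i j, H i j = H j i) -> (adj R H)^T = adj R H.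
Proof. by move=> H_sym; apply/matrixP => i j; rewrite !mxE H_sym. Qed.

Lemma adj_ge0 (H : rel 'I_n) i j : 0 <= adj R H i j.
Proof. by rewrite mxE; case: ifP. Qed.

Lemma spectral_radius_gt (H : rel 'I_n) y mu r :
  (forall i j, H i j = H j i) -> mu * sqnorm y < qform (adj R H) y ->
  is_spectral_radius (adj R H) r -> mu < r.
Proof.
move=> H_sym muH [_ r_max].
have [a [Ha mu_lt_a]] := qform_lt_eigenvalue (adj_tr H_sym) muH.
by rewrite (lt_le_trans mu_lt_a) // (le_trans (ler_norm a)) ?r_max.
Qed.

Lemma sqnorm_abs (y : 'I_n -> R) : sqnorm (fun i => `|y i|) = sqnorm y.
Proof. by apply: eq_bigr => i _; rewrite real_normK ?num_real. Qed.

Lemma sqnorm_add_delta (y : 'I_n -> R) a e : y a = 0 ->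
  sqnorm (fun i => y i + (i == a)%:R * e) = sqnorm y + e ^+ 2.
Proof.
move=> ya0; rewrite /sqnorm (bigD1 a) //= [in RHS](bigD1 a) //= eqxx ya0 mul1r.
rewrite add0r expr0n add0r addrC; congr (_ + _); apply: eq_bigr => i /negbTE ->.
by rewrite mul0r addr0.
Qed.

Lemma qform_add_delta_ge (M : 'M[R]_n) (y : 'I_n -> R) a e :
  (forall i j, 0 <= M i j) -> (forall i, 0 <= y i) -> 0 <= e ->
  qform M y + e * \sum_j M a j * y j <= qform M (fun i => y i + (i == a)%:R * e).
Proof.
move=> M_ge0 y_ge0 e_ge0.
have -> : e * \sum_j M a j * y j =
    \sum_(p : 'I_n * 'I_n) (p.1 == a)%:R * e * M p.1 p.2 * y p.2.
  rewrite -(pair_bigA _ (fun i j => (i == a)%:R * e * M i j * y j)) [RHS](bigD1 a) //=.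
  rewrite [X in _ + X]big1 ?addr0 => [|i /negbTE ia]; last first.
    by rewrite big1 // => j _; rewrite ia !mul0r.
  by rewrite mulr_sumr; apply: eq_bigr => j _; rewrite eqxx mul1r mulrA.
rewrite /qform -big_split; apply: ler_sum => -[i j] _ /=.
pose d (k : 'I_n) : R := (k == a)%:R.
have d_ge0 k : 0 <= d k by rewrite ler0n.
rewrite -/(d i) -/(d j).
have -> : (y i + d i * e) * M i j * (y j + d j * e) =
    y i * M i j * y j + d i * e * M i j * y j + (y i + d i * e) * M i j * (d j * e).
  by ring.
by rewrite lerDl !mulr_ge0 ?addr_ge0 ?mulr_ge0 ?y_ge0 ?M_ge0 ?d_ge0.
Qed.

Definition del_edge (G : rel 'I_n) (a b : 'I_n) : rel 'I_n :=
  fun i j => G i j && ((i, j) \notin [:: (a, b); (b, a)]).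

Lemma del_edge_spanning_proper (G : rel 'I_n) a b : simple_graph G -> G a b ->
  [/\ simple_graph (del_edge G a b), (forall i j, del_edge G a b i j -> G i j)
     & exists i j, G i j && ~~ del_edge G a b i j].
Proof.
move=> [G_sym G_irr] Gab; split.
- split=> [i j|i]; last by rewrite /del_edge (negbTE (G_irr i)).
  rewrite /del_edge G_sym !inE !xpair_eqE orbC; congr (_ && ~~ (_ || _)); exact: andbC.
- by move=> i j /andP[].
- by exists a, b; rewrite /del_edge Gab !inE eqxx.
Qed.

Section SignedGraph.
Variables (G : rel 'I_n) (pi : 'I_n -> 'I_n -> R).
Hypotheses (simpleG : simple_graph G) (signG : signing G pi).
Local Notation A := (signed_adj G pi).

Lemma edge_neq a b : G a b -> a != b.
Proof.
by case: simpleG => _ G_irr Gab; apply: contraTneq Gab => ->; rewrite (negbTE (G_irr b)).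
Qed.

Lemma signed_adj_sym i j : A i j = A j i.
Proof.
have [G_sym _] := simpleG.
by rewrite !mxE G_sym; case: ifP => // Gji; have [_ ->] := signG Gji.
Qed.

Lemma signed_adj_neq0 i j : G i j -> A i j != 0.
Proof.
by move=> Gij; rewrite mxE Gij; have [[->|->] _] := signG Gij; rewrite ?oppr_eq0 oner_eq0.
Qed.

Lemma signed_term_le_abs (x : 'I_n -> R) i j :
  x i * A i j * x j <= `|x i| * adj R G i j * `|x j|.
Proof.
rewrite !mxE; case: ifP => Gij; last by rewrite !mulr0 !mul0r.
rewrite (le_trans (ler_norm _)) // !normrM.
by have [[->|->] _] := signG Gij; rewrite ?normrN normr1.
Qed.

Lemma qform_signed_le_del_edge (x : 'I_n -> R) a b : a != b ->
  qform A x <= qform (adj R (del_edge G a b)) (fun i => `|x i|)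
               + (x a * A a b * x b + x b * A b a * x a).
Proof.
move=> ab; have ba : (b, a) != (a, b) by rewrite xpair_eqE negb_and eq_sym ab.
have split_ab (F : 'I_n * 'I_n -> R) : \sum_p F p =
    F (a, b) + F (b, a) + \sum_(p | (p != (a, b)) && (p != (b, a))) F p.
  by rewrite (bigD1 (a, b)) //= (bigD1 (b, a)) //= addrA.
rewrite /qform !split_ab addrC lerD //.
rewrite !mxE /del_edge !inE !eqxx ?orbT !andbF !mulr0 !mul0r !add0r.
apply: ler_sum => -[i j] /andP[ij_ab ij_ba] /=.
rewrite [adj R _ i j]mxE /del_edge !inE (negbTE ij_ab) (negbTE ij_ba) andbT.
by have := signed_term_le_abs x i j; rewrite [adj R G i j]mxE.
Qed.

Lemma exists_edge_of_unbalanced : ~ balanced G pi -> exists a b, G a b.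
Proof.
move=> unbal; have [[a b] Gab | no_edge] := pickP (fun p => G p.1 p.2); first by exists a, b.
case: unbal; exists (fun=> 1); split=> [i|]; first by left.
have adj0 (p : 'I_n -> 'I_n -> R) : signed_adj G p = 0.
  by apply/matrixP => i j; rewrite !mxE (no_edge (i, j)).
by rewrite /adj !adj0 mulmx0 mul0mx.
Qed.

Lemma balanced_of_edge_terms_gt0 (x : 'I_n -> R) :
  (forall i, x i != 0) -> (forall i j, G i j -> 0 < x i * A i j * x j) ->
  balanced G pi.
Proof.
move=> x_neq0 x_pos.
have sg_sign i : Num.sg (x i) = 1 \/ Num.sg (x i) = -1.
  by have := x_neq0 i; case: ltgtP => [/ltr0_sg|/gtr0_sg|]; [right|left|].
exists (fun i => Num.sg (x i)); split => //.
set D := diag_mx _.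
have DD : D *m D = 1%:M.
  apply/matrixP => i j; rewrite mul_diag_mx !mxE.
  case: (eqVneq i j) => [->|ij]; last by rewrite mulr0n mulr0.
  by rewrite !mulr1n; case: (sg_sign j) => ->; rewrite ?mulr1 ?mulrNN ?mulr1.
have D_unit : D \in unitmx by have [] := mulmx1_unit DD.
have -> : invmx D = D by rewrite -[invmx D]mulmx1 -DD mulmxA mulVmx ?mul1mx.
apply/matrixP => i j; rewrite mul_mx_diag mul_diag_mx !mxE.
case: ifP => Gij; last by rewrite mulr0 mul0r.
have := x_pos i j Gij; rewrite mxE Gij => /gtr0_sg; rewrite !sgrM.
have [pi_sign _] := signG Gij.
suff -> : Num.sg (pi i j) = pi i j by move=> <-.
by case: pi_sign => ->; rewrite ?sgr1 ?sgrN1.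
Qed.

Section Eigenfunction.
Variables (l0 : R) (x : 'I_n -> R).
Hypothesis eig : forall j, \sum_i x i * A i j = l0 * x j.

Lemma qform_eigenfun : qform A x = l0 * sqnorm x.
Proof.
rewrite /qform -(pair_bigA _ (fun i j => x i * A i j * x j)) exchange_big.
rewrite /sqnorm mulr_sumr; apply: eq_bigr => j _.
by rewrite -mulr_suml eig expr2 mulrA.
Qed.

Lemma radius_gt_of_negative_edge a b : G a b -> x a * A a b * x b < 0 ->
  forall r, is_spectral_radius (adj R (del_edge G a b)) r -> l0 < r.
Proof.
move=> Gab neg r; have [[H_sym _] _ _] := del_edge_spanning_proper simpleG Gab.
apply: (spectral_radius_gt (y := fun i => `|x i|) H_sym).
rewrite sqnorm_abs -qform_eigenfun.
apply: le_lt_trans (qform_signed_le_del_edge x (edge_neq Gab)) _; rewrite gtrDl.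
rewrite (signed_adj_sym b a); lra.
Qed.

Lemma exists_other_nonzero_neighbour a b : G a b -> x a = 0 -> x b != 0 ->
  exists w, [/\ G a w, w != b & x w != 0].
Proof.
move=> Gab xa0 xb_neq0; have [G_sym _] := simpleG.
have [w /and3P[] | none] := pickP (fun w => [&& G a w, w != b & x w != 0]).
  by exists w.
have := eig a; rewrite xa0 mulr0 (bigD1 b) //= big1 ?addr0 => [|k kb].
  by move/eqP; rewrite mulf_eq0 (negbTE xb_neq0) (negbTE (signed_adj_neq0 _)) // G_sym.
rewrite mxE; case: ifP => Gka; last by rewrite mulr0.
by have := none k; rewrite /= -G_sym Gka kb /= => /negbFE/eqP->; rewrite mul0r.
Qed.

Lemma radius_gt_of_zero_entry a b : G a b -> x a = 0 -> x b != 0 ->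
  forall r, is_spectral_radius (adj R (del_edge G a b)) r -> l0 < r.
Proof.
move=> Gab xa0 xb_neq0 r.
have [[H_sym _] _ _] := del_edge_spanning_proper simpleG Gab.
have [w [Gaw wb xw_neq0]] := exists_other_nonzero_neighbour Gab xa0 xb_neq0.
set H := del_edge G a b in H_sym *.
set S := \sum_j adj R H a j * `|x j|.
have ab := edge_neq Gab.
have Haw : H a w.
  by rewrite /H /del_edge Gaw !inE !xpair_eqE (negbTE wb) (negbTE ab) andbF.
have S_gt0 : 0 < S.
  rewrite /S (bigD1 w) //= mxE Haw mul1r ltr_pwDl ?normr_gt0 // sumr_ge0 // => j _.
  by rewrite mulr_ge0 ?adj_ge0.
(* e is small enough that l0 e^2 < e S, the gain from the new terms. *)
pose e := S / (`|l0| + 1).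
have e_gt0 : 0 < e by rewrite divr_gt0 // ltr_pwDr.
have eS : e * S = e ^+ 2 * (`|l0| + 1).
  by rewrite expr2 -mulrA /e divfK // gt_eqF // ltr_pwDr.
have le_H : l0 * sqnorm x <= qform (adj R H) (fun i => `|x i|).
  rewrite -qform_eigenfun (le_trans (qform_signed_le_del_edge x ab)) //.
  by rewrite xa0 !mul0r mulr0 !addr0.
apply: (spectral_radius_gt (y := fun i => `|x i| + (i == a)%:R * e) H_sym).
rewrite sqnorm_add_delta ?xa0 ?normr0 // sqnorm_abs mulrDr.
apply: lt_le_trans
  (qform_add_delta_ge a (@adj_ge0 H) (fun i => normr_ge0 (x i)) (ltW e_gt0)).
rewrite ler_ltD // -/S eS mulrC ltr_pM2l ?exprn_gt0 //.
by rewrite (le_lt_trans (ler_norm l0)) // ltrDl.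
Qed.

Lemma exists_edge_radius_gt :
  connected_graph G -> ~ balanced G pi -> (exists t, x t != 0) ->
  exists a b, G a b /\
    forall r, is_spectral_radius (adj R (del_edge G a b)) r -> l0 < r.
Proof.
move=> [_ connG] unbal [t xt_neq0].
have [u /eqP xu0 | x_neq0] := pickP (fun u => x u == 0).
  have [a [b [Gab /eqP xa0 xb_neq0]]] :=
    connect_cross_edge (P := fun i => x i == 0) (connG u t) (introT eqP xu0) xt_neq0.
  by exists a, b; split=> //; apply: radius_gt_of_zero_entry.
have [[a b] /andP[Gab neg] | no_neg] :=
  pickP (fun p => G p.1 p.2 && (x p.1 * A p.1 p.2 * x p.2 < 0)).
  by exists a, b; split=> //; apply: radius_gt_of_negative_edge.
case: unbal; apply: (balanced_of_edge_terms_gt0 (x := x)) => [i|i j Gij].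
  by rewrite x_neq0.
have := no_neg (i, j); rewrite /= Gij /= => /negbT; rewrite -leNgt => term_ge0.
by rewrite lt_def term_ge0 andbT !mulf_eq0 !x_neq0 (negbTE (signed_adj_neq0 Gij)).
Qed.

End Eigenfunction.
End SignedGraph.
End RayleighQuotients.

Theorem mainTheorem1 (R : rcfType) (n : nat) (G : rel 'I_n)
    (pi : 'I_n -> 'I_n -> R) :
  simple_graph G -> connected_graph G -> signing G pi -> ~ balanced G pi ->
  exists H : rel 'I_n,
    [/\ simple_graph H,
        (forall i j, H i j -> G i j),
        (exists i j, G i j && ~~ H i j) &
        forall l r, is_lambda1 (signed_adj G pi) l ->
                    is_spectral_radius (adj R H) r -> l < r].
Proof.
move=> simpleG connG signG unbal.
suff [a [b [Gab lt_radius]]] : exists a b, G a b /\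
    forall l r, is_lambda1 (signed_adj G pi) l ->
                is_spectral_radius (adj R (del_edge G a b)) r -> l < r.
  have [simpleH subH properH] := del_edge_spanning_proper simpleG Gab.
  by exists (del_edge G a b).
(* Without a largest eigenvalue the last conjunct holds vacuously. *)
have [[l1 [eig_l1 l1_max]] | no_lambda1] :=
  classic (exists l, is_lambda1 (signed_adj G pi) l).
  have [x x_neq0 eig_x] := eigenvalue_eigenfun eig_l1.
  have [a [b [Gab gt_l1]]] :=
    exists_edge_radius_gt simpleG signG eig_x connG unbal x_neq0.
  exists a, b; split=> // l r l_lambda1.
  by rewrite (lambda1_unique l_lambda1 (conj eig_l1 l1_max)); apply: gt_l1.
have [a [b Gab]] := exists_edge_of_unbalanced unbal.
by exists a, b; split=> // l r l_lambda1; case: no_lambda1; exists l.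
Qed.
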